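(* Let $d\ge2$ and let $\mathcal{G},\mathcal{H}\subseteq\binom{\mathbb{N}}{d}$ be finite families with $|\mathcal{G}|=|\mathcal{H}|$. If $\mathcal{G}$ is compressed and $\mathcal{H}$ is both left-compressed and right-compressed, then $|\mathrm{Inc}(\mathcal{G})|\le|\mathrm{Inc}(\mathcal{H})|$.
   Context: $\mathbb{N}=\{1,2,3,\dots\}$, $\mathbb{N}_{>k}=\{k+1,k+2,\dots\}$. $\binom{S}{d}$ is the set of $d$-element subsets of $S$; elements are written $\mathbf{u}=(u_1,\ldots,u_d)$ with $u_1<\cdots<u_d$. Squashed order: $\mathbf{u}<\mathbf{v}$ iff the largest element of the symmetric difference of $\mathbf{u},\mathbf{v}$ belongs to $\mathbf{v}$. A finite family in $\binom{\mathbb{N}}{e}$ (resp. $\binom{\mathbb{N}_{>k}}{e}$) is compressed (in it) if it consists of the smallest elements of $\binom{\mathbb{N}}{e}$ (resp. $\binom{\mathbb{N}_{>k}}{e}$) in the squashed order. For $\mathcal{F}\subseteq\binom{\mathbb{N}}{d}$ and $k\ge1$: $\widehat{\mathcal{F}}_{1,k}=\{\widehat{\mathbf{u}}\in\binom{\mathbb{N}_{>k}}{d-1}\mid \{k\}\cup\widehat{\mathbf{u}}\in\mathcal{F}\}$ and $\widehat{\mathcal{F}}_{d,k}=\{\widehat{\mathbf{u}}\in\binom{\mathbb{N}}{d-1}\mid \max\widehat{\mathbf u}<k,\ \widehat{\mathbf{u}}\cup\{k\}\in\mathcal{F}\}$. $\mathcal{F}$ is left-compressed if every $\widehat{\mathcal{F}}_{1,k}$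 is compressed in $\binom{\mathbb{N}_{>k}}{d-1}$, and right-compressed if every $\widehat{\mathcal{F}}_{d,k}$ is compressed in $\binom{\mathbb{N}}{d-1}$. $\mathrm{Inc}_1$ is the set of maps $\pi\colon\mathbb{N}\to\mathbb{N}$ with $\pi(j)<\pi(j+1)$ and $\pi(j)\le j+1$ for all $j$, acting by $\pi(\mathbf{u})=(\pi(u_1),\ldots,\pi(u_d))$; $\mathrm{Inc}(\mathcal{F})=\{\pi(\mathbf{u})\mid\mathbf{u}\in\mathcal{F},\pi\in\mathrm{Inc}_1\}$. *)

From mathcomp Require Import all_boot.
Set Implicit Arguments. Unset Strict Implicit. Unset Printing Implicit Defensive.

(* A finite subset of N = {1,2,...} is represented by the strictly increasing
   list of its elements.  [is_dset k e u] : u is an element of binom(N_{>k}, e);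
   binom(N, e) is the case k = 0. *)
Definition is_dset (k e : nat) (u : seq nat) : bool :=
  [&& sorted ltn u, size u == e & all (fun x => k < x) u].

Definition squashed_lt (u v : seq nat) : Prop :=
  exists x, [/\ x \in v, x \notin u &
    forall y, x < y -> (y \in u) = (y \in v)].

Definition compressed_in (k e : nat) (P : seq nat -> Prop) : Prop :=
  (forall u, P u -> is_dset k e u) /\
  (forall u v, P v -> is_dset k e u -> squashed_lt u v -> P u).

Definition hatF1 (d k : nat) (F : seq (seq nat)) (u : seq nat) : Prop :=
  is_dset k d.-1 u /\ (k :: u) \in F.

Definition hatFd (d k : nat) (F : seq (seq nat)) (u : seq nat) : Prop :=
  [/\ is_dset 0 d.-1 u, all (fun x => x < k) u & rcons u k \in F].

Definition left_compressed (d : nat) (F : seq (seq nat)) : Prop :=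
  forall k, 1 <= k -> compressed_in k d.-1 (hatF1 d k F).

Definition right_compressed (d : nat) (F : seq (seq nat)) : Prop :=
  forall k, 1 <= k -> compressed_in 0 d.-1 (hatFd d k F).

(* Inc_1: maps pi : N -> N with pi(j) < pi(j+1) and pi(j) <= j+1 for j in N.
   (The value at 0 is irrelevant.) *)
Definition Inc1 (pi : nat -> nat) : Prop :=
  forall j, 1 <= j -> [/\ 1 <= pi j, pi j < pi j.+1 & pi j <= j.+1].

Definition IncF (F : seq (seq nat)) (w : seq nat) : Prop :=
  exists u pi, [/\ u \in F, Inc1 pi & w = map pi u].

(* s is a duplicate-free enumeration of the set P (so |P| = size s). *)
Definition enumerates (s : seq (seq nat)) (P : seq nat -> Prop) : Prop :=
  uniq s /\ forall w, w \in s <-> P w.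

From mathcomp Require Import all_boot zify.
Set Implicit Arguments. Unset Strict Implicit. Unset Printing Implicit Defensive.

(* Both sides are compared with an explicit function Phi_d(|G|) defined from the
   d-cascade representation of |G|:
   - upper bound: for compressed G, |Inc(G)| <= Phi_d(|G|).  Splitting G at its
     largest maximum M gives all of binom({1..M-1}, d) plus a compressed family
     of (d-1)-sets to which M is appended; induct on d;
   - lower bound: if H is down-closed (closed under entrywise decrease inside
     binom(N_{>k}, d)), then |Inc(H)| >= Phi_d(|H|).  Splitting H according to
     whether its sets start with k+1, a double induction on d and |H| reduces
     this to the numerical inequality beta_e on Phi;
   - left- plus right-compression implies down-closedness. *)

Lemma binomial_unbounded d m : 1 <= d -> m < 'C(m + d, d).
Proof.
case: d => // d _; elim: d m => [|d IH] m; first by rewrite bin1; lia.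
rewrite addnS binS; have := IH m; lia.
Qed.

(* For d >= 1, every m lies between two consecutive binomials
   C(n, d) <= m < C(n+1, d); [top d m] is that n, the leading index of the
   d-cascade of m, found by search below the bound m + d. *)
Definition top (d m : nat) : nat :=
  find (fun n => m < 'C(n.+1, d)) (iota 0 (m + d)).

Lemma top_spec d m : 1 <= d -> 'C(top d m, d) <= m < 'C((top d m).+1, d).
Proof.
move=> d1; rewrite /top; set p := fun n => m < 'C(n.+1, d).
have has_p : has p (iota 0 (m + d)).
  apply/hasP; exists (m + d).-1; first by rewrite mem_iota; lia.
  by rewrite /p prednK; [exact: binomial_unbounded | lia].
have find_lt : find p (iota 0 (m + d)) < m + d.
  by rewrite -{2}(size_iota 0 (m + d)) -has_find.
have := nth_find 0 has_p; rewrite /p nth_iota ?add0n // => ->; rewrite andbT.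
case E: (find p (iota 0 (m + d))) find_lt => [|t] find_lt.
  by rewrite bin0n; case: (d) d1.
have := before_find 0 (_ : t < find p (iota 0 (m + d))).
rewrite E => /(_ (ltnSn t)); rewrite /p nth_iota ?add0n; last lia.
by rewrite ltnNge => /negbFE.
Qed.

Lemma top_uniq d m n : 1 <= d -> 'C(n, d) <= m < 'C(n.+1, d) -> top d m = n.
Proof.
move=> d1 /andP[lo hi]; have /andP[tlo thi] := top_spec m d1.
by case: (ltngtP (top d m) n) => // h; have := leq_bin2l d h; lia.
Qed.

(* It is the common value
   of the two bounds below: an upper bound on |Inc| for compressed families and a
   lower bound for down-closed ones. *)
Fixpoint Phi (d m : nat) : nat :=
  if d is d'.+1 then
    (if m is 0 then 0 else 'C((top d m).+1, d) + Phi d' (m - 'C(top d m, d)))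
  else m.

Lemma Phi0 d : Phi d 0 = 0.
Proof. by case: d. Qed.

Lemma PhiS d m : 0 < m ->
  Phi d.+1 m = 'C((top d.+1 m).+1, d.+1) + Phi d (m - 'C(top d.+1 m, d.+1)).
Proof. by case: m. Qed.

Lemma Phi_binomial e n : e <= n -> Phi e 'C(n, e) = 'C(n.+1, e).
Proof.
case: e => [|e] en; first by rewrite /= !bin0.
have Cn_pos : 0 < 'C(n, e.+1) by rewrite bin_gt0.
have Cn'_pos : 0 < 'C(n, e) by rewrite bin_gt0; lia.
rewrite PhiS // (@top_uniq _ _ n) //; last by rewrite binS; lia.
by rewrite subnn Phi0 addn0.
Qed.

Lemma Phi_cascade d n r : 0 < r <= 'C(n, d) ->
  Phi d.+1 ('C(n, d.+1) + r) = 'C(n.+1, d.+1) + Phi d r.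
Proof.
move=> /andP[r_pos r_le]; have dn : d <= n by rewrite -bin_gt0; lia.
case: (ltngtP r 'C(n, d)) r_le => // r_cmp _.
  rewrite PhiS; last lia.
  by rewrite (@top_uniq _ _ n) ?addKn //; rewrite binS; lia.
by rewrite r_cmp -binS (@Phi_binomial d.+1 n.+1) // (Phi_binomial dn) binS.
Qed.

Lemma cascade d m : 0 < m -> exists n r, m = 'C(n, d.+1) + r /\ 0 < r <= 'C(n, d).
Proof.
move=> m_pos; have /andP[lo hi] := top_spec m (ltn0Sn d); set t := top d.+1 m in lo hi.
case: (ltngtP 'C(t, d.+1) m) lo => // cmp _.
  by exists t, (m - 'C(t, d.+1)); move: hi; rewrite binS; lia.
have td : d.+1 <= t by rewrite -bin_gt0 cmp.
exists t.-1, 'C(t.-1, d); rewrite leqnn andbT bin_gt0; split; last lia.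
by rewrite -cmp -[in LHS](prednK (leq_ltn_trans (leq0n d) td)) binS.
Qed.

Lemma Phi_succ e x : Phi e x < Phi e x.+1.
Proof.
elim: e x => [|e IH] [|x] //.
  by have := Phi_binomial (leqnn e.+1); rewrite binn Phi0 => ->; rewrite bin_gt0.
have [n [r [-> /andP[r_pos r_le]]]] := cascade e (ltn0Sn x).
rewrite Phi_cascade ?r_pos //.
case: (ltngtP r 'C(n, e)) r_le => // r_cmp _.
  by rewrite -[('C(n, e.+1) + r).+1]addnS Phi_cascade ?ltn_add2l ?IH //; lia.
have en : e <= n by rewrite -bin_gt0; lia.
rewrite r_cmp -binS (Phi_binomial en).
have := @Phi_cascade e n.+1 1; rewrite addn1 => ->; last by rewrite bin_gt0; lia.
by have := IH 0; rewrite Phi0 (binS n.+1 e); lia.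
Qed.

Lemma Phi_add e x y : Phi e x + y <= Phi e (x + y).
Proof.
elim: y => [|y IH]; first by rewrite !addn0.
by have := Phi_succ e (x + y); rewrite !addnS; lia.
Qed.

Lemma Phi_mono e x y : x <= y -> Phi e x <= Phi e y.
Proof. by move=> xy; have := Phi_add e x (y - x); rewrite subnKC //; lia. Qed.

Lemma Phi_ge e x : x <= Phi e x.
Proof. by have := Phi_add e 0 x; rewrite Phi0. Qed.

Lemma Phi1 m : 0 < m -> Phi 1 m = m.+1.
Proof.
move=> m_pos; have [n [r [-> /andP[r_pos]]]] := cascade 0 m_pos.
rewrite bin0 => r_le; have -> : r = 1 by lia.
by rewrite Phi_cascade ?bin0 // !bin1 /=; lia.
Qed.

(* If Phi_{e+1}(a) already reaches C(n+1, e+1) = Phi_{e+1}(C(n, e+1)), then the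
   gap between r <= C(n, e+1) and C(n, e+1) is absorbed. *)
Lemma Phi_catch_up e n r a : e.+1 <= n -> r <= 'C(n, e.+1) ->
  'C(n.+1, e.+1) <= Phi e.+1 a -> 'C(n, e.+1) + Phi e.+1 r <= r + Phi e.+1 a.
Proof.
move=> en r_le big; have := Phi_add e.+1 r ('C(n, e.+1) - r).
by rewrite subnKC // Phi_binomial //; lia.
Qed.

(* The key inequality (beta_e) driving the induction on |H|:
     Phi_{e+1}(b) <= a + b  implies  Phi_{e+1}(a + b) <= a + b + Phi_e(a).
   It is proved by induction on e; the step is split according to the position
   of b relative to the cascade a + b = C(n, e+2) + r. *)
Definition beta_ineq (e : nat) : Prop :=
  forall a b, Phi e.+1 b <= a + b -> Phi e.+1 (a + b) <= a + b + Phi e a.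

Lemma beta0 : beta_ineq 0.
Proof.
move=> a b hyp; case: (posnP (a + b)) => [->|ab_pos]; first by rewrite Phi0.
rewrite (Phi1 ab_pos) /=; case: (posnP a) => [a0|]; last lia.
by move: hyp ab_pos; rewrite a0 add0n => hyp b_pos; move: hyp; rewrite Phi1 //; lia.
Qed.

Section BetaStep.

Variable e : nat.
Hypothesis IH : beta_ineq e.

(* In the step, a + b = C(n, e+2) + r with 0 < r <= C(n, e+1), and the goal is
   C(n, e+1) + Phi_{e+1}(r) <= r + Phi_{e+1}(a); the cases are split by b.
   First, b cannot exceed C(n, e+2), for then Phi_{e+2}(b) would exceed a + b. *)
Lemma beta_b_small a b n r : Phi e.+2 b <= a + b -> a + b = 'C(n, e.+2) + r ->
  0 < r <= 'C(n, e.+1) -> b <= 'C(n, e.+2).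
Proof.
move=> hyp ab /andP[r_pos r_le]; rewrite leqNgt; apply/negP => b_big.
move: hyp; rewrite -(subnKC (ltnW b_big)) Phi_cascade; last lia.
by have := Phi_ge e.+1 (b - 'C(n, e.+2)); rewrite binS; lia.
Qed.

(* b = C(n, e+2) forces a = r = C(n, e+1). *)
Lemma beta_b_eq a b n r : Phi e.+2 b <= a + b -> a + b = 'C(n, e.+2) + r ->
  0 < r <= 'C(n, e.+1) -> b = 'C(n, e.+2) ->
  'C(n, e.+1) + Phi e.+1 r <= r + Phi e.+1 a.
Proof.
move=> hyp ab /andP[r_pos r_le] b_eq; have -> : a = r by lia.
suff -> : r = 'C(n, e.+1) by [].
case: (leqP e.+2 n) => ne.
  by move: hyp; rewrite b_eq Phi_binomial // binS; lia.
have en : e.+1 <= n by rewrite -bin_gt0; lia.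
have n_eq : n = e.+1 by lia.
by move: r_le; rewrite n_eq binn; lia.
Qed.

(* Cascade index n+1 and b <= C(n, e+2), so that a >= C(n, e+1) + r: use beta_e
   at (r, 0) if r <= C(n, e), and Phi_catch_up otherwise. *)
Lemma beta_b_low a n r : e.+1 <= n -> 0 < r <= 'C(n.+1, e.+1) ->
  'C(n, e.+1) + r <= a -> 'C(n.+1, e.+1) + Phi e.+1 r <= r + Phi e.+1 a.
Proof.
move=> en /andP[r_pos r_le] a_big.
case: (leqP r 'C(n, e)) => r_cmp.
  have := @IH r 0; rewrite addn0 Phi0 => /(_ (leq0n _)) beta_r.
  by have := Phi_mono e.+1 a_big; rewrite Phi_cascade ?r_pos //; lia.
apply: Phi_catch_up => //; first lia.
rewrite -Phi_binomial; last lia.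
by apply: Phi_mono; rewrite binS; lia.
Qed.

(* Cascade index n+1 and C(n, e+2) < b < C(n+1, e+2): write b = C(n, e+2) + s,
   so that a = C(n, e+1) + (r - s), and use beta_e at (r - s, s). *)
Lemma beta_b_mid a b n r : Phi e.+2 b <= a + b -> a + b = 'C(n.+1, e.+2) + r ->
  0 < r <= 'C(n.+1, e.+1) -> 'C(n, e.+2) < b < 'C(n.+1, e.+2) ->
  'C(n.+1, e.+1) + Phi e.+1 r <= r + Phi e.+1 a.
Proof.
move=> hyp ab /andP[r_pos r_le] /andP[b_lo b_hi].
have en : e.+1 <= n by rewrite -bin_gt0; move: b_hi; rewrite binS; lia.
set s := b - 'C(n, e.+2); have b_eq : b = 'C(n, e.+2) + s by rewrite /s; lia.
have s_rng : 0 < s <= 'C(n, e.+1) by rewrite /s; move: b_hi; rewrite binS; lia.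
move: hyp; rewrite b_eq Phi_cascade // => hyp; have s_Phi : Phi e.+1 s <= r by lia.
have := Phi_ge e.+1 s => s_le; move: ab; rewrite binS => ab.
have [c r_eq] : exists c, r = c + s by exists (r - s); lia.
have a_eq : a = 'C(n, e.+1) + c by lia.
case: (leqP c 'C(n, e)) => c_cmp; last first.
  apply: Phi_catch_up => //; first lia.
  rewrite -Phi_binomial; last lia.
  by apply: Phi_mono; rewrite binS; lia.
have Phi_a : Phi e.+1 a = 'C(n.+1, e.+1) + Phi e c.
  rewrite a_eq; case: (posnP c) => [c0|c_pos]; last by rewrite Phi_cascade ?c_pos.
  by rewrite c0 Phi0 !addn0 Phi_binomial.
have := @IH c s; rewrite -r_eq => /(_ s_Phi); rewrite Phi_a; lia.
Qed.

Lemma beta_step : beta_ineq e.+1.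
Proof.
move=> a b hyp; case: (posnP (a + b)) => [->|ab_pos]; first by rewrite Phi0.
have [n [r [ab /andP[r_pos r_le]]]] := cascade e.+1 ab_pos.
suff goal : 'C(n, e.+1) + Phi e.+1 r <= r + Phi e.+1 a.
  by rewrite ab Phi_cascade ?r_pos // binS; lia.
have r_rng : 0 < r <= 'C(n, e.+1) by rewrite r_pos.
have := beta_b_small hyp ab r_rng; rewrite leq_eqVlt => /orP[/eqP b_eq|b_lt].
  exact: beta_b_eq hyp ab r_rng b_eq.
case: n ab r_le r_rng b_lt => [|n] ab r_le r_rng b_lt; first by move: r_le; rewrite bin0n.
case: (leqP b 'C(n, e.+2)) => b_cmp.
  have en : e.+1 <= n by rewrite -ltnS -bin_gt0; lia.
  by apply: beta_b_low => //; move: ab; rewrite binS; lia.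
by apply: (beta_b_mid hyp ab r_rng); rewrite b_cmp.
Qed.

End BetaStep.

Lemma beta e : beta_ineq e.
Proof. by elim: e => [|e IH]; [exact: beta0 | exact: beta_step]. Qed.

Lemma is_dset_nil k e : is_dset k e [::] = (e == 0).
Proof. by case: e. Qed.

Lemma is_dset_size k e s : is_dset k e s -> size s = e.
Proof. by case/and3P => _ /eqP. Qed.

Lemma is_dset_sorted k e s : is_dset k e s -> sorted ltn s.
Proof. by case/and3P. Qed.

Lemma is_dset_gt k e s x : is_dset k e s -> x \in s -> k < x.
Proof. by case/and3P => _ _ /allP; apply. Qed.

Lemma dset_head_le k e s x : is_dset k e s -> x \in s -> head 0 s <= x.
Proof.
case: s => //= y s /is_dset_sorted /=; rewrite (path_sortedE ltn_trans) => /andP[/allP y_lt _].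
by rewrite inE => /orP[/eqP->|/y_lt /ltnW].
Qed.

Lemma is_dset_mono i j e s : j <= i -> is_dset i e s -> is_dset j e s.
Proof.
move=> ji /and3P[s_sorted s_size s_gt]; apply/and3P; split => //.
by apply: sub_all s_gt => x /=; lia.
Qed.

Lemma is_dset_cons k e x s :
  is_dset k e.+1 (x :: s) = (k < x) && is_dset x e s.
Proof.
rewrite /is_dset /= (path_sortedE ltn_trans) eqSS.
case kx: (k < x); last by rewrite !andbF.
case ax: (all (fun y => x < y) s); last by rewrite /= !andbF.
have -> : all (fun y => k < y) s by apply: sub_all ax => y /=; lia.
by rewrite /= !andbT.
Qed.

Lemma is_dset_rcons k e s x :
  is_dset k e.+1 (rcons s x) = [&& is_dset k e s, all (fun y => y < x) s & k < x].
Proof.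
elim: s k e => [|y s IH] k e.
  by rewrite /is_dset /= andbT eqSS eq_sym; case: (e == 0); rewrite ?andbF.
case: e => [|e]; first by rewrite /is_dset size_rcons /= !andbF.
rewrite rcons_cons is_dset_cons IH is_dset_cons /=.
case ky: (k < y) => //=; case: (is_dset y e s) => //=.
case: (all (fun z => z < x) s) => /=; last by rewrite !andbF.
by rewrite andbT; case yx: (y < x) => /=; lia.
Qed.

Lemma last_in (s : seq nat) : s != [::] -> last 0 s \in s.
Proof. by case: s => // x s _; exact: mem_last. Qed.

Lemma dset_le_last k e s y : is_dset k e s -> y \in s -> y <= last 0 s.
Proof.
case/lastP: s => // s x; case: e => [|e]; first by move/is_dset_size; rewrite size_rcons.
rewrite is_dset_rcons last_rcons mem_rcons inE => /and3P[_ /allP s_lt _].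
by case/orP => [/eqP->|/s_lt /= /ltnW].
Qed.

Lemma squashed_lt_last k n u v : is_dset k n.+1 u -> is_dset k n.+1 v ->
  last 0 u < last 0 v -> squashed_lt u v.
Proof.
move=> u_dset v_dset lt_last; exists (last 0 v); split.
- by apply: last_in; apply/eqP => v0; move: v_dset; rewrite v0 is_dset_nil.
- by apply/negP => /(dset_le_last u_dset); lia.
- move=> y y_gt; have -> : (y \in u) = false by apply/negP => /(dset_le_last u_dset); lia.
  by apply/esym/negP => /(dset_le_last v_dset); lia.
Qed.

(* If u = k :: u', a map
   pi in Inc_1 either moves k to k+1, which forces pi to be the successor on
   every later element, or fixes k and acts on u' alone. *)
Fixpoint inc_images (u : seq nat) : seq (seq nat) :=
  if u is k :: u' then map succn u :: [seq k :: v | v <- inc_images u']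
  else [:: [::]].

Definition inc_list (F : seq (seq nat)) : seq (seq nat) :=
  flatten (map inc_images F).

Lemma inc_listP F w :
  reflect (exists2 u, u \in F & w \in inc_images u) (w \in inc_list F).
Proof.
apply: (iffP flattenP) => [[s /mapP[u u_in ->] w_in]|[u u_in w_in]].
  by exists u.
by exists (inc_images u) => //; exact: map_f.
Qed.

Lemma inc_images_id u : u \in inc_images u.
Proof. by elim: u => [|k u IH] //=; rewrite inE map_f ?orbT. Qed.

Lemma inc_images_succ u : u != [::] -> map succn u \in inc_images u.
Proof. by case: u => //= k u _; rewrite inE eqxx. Qed.

Lemma inc_images_cons k u v : v \in inc_images u -> k :: v \in inc_images (k :: u).
Proof. by move=> v_in; rewrite /= inE map_f ?orbT. Qed.

Lemma inc_imagesP k u w : w \in inc_images (k :: u) ->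
  w = map succn (k :: u) \/ exists2 v, v \in inc_images u & w = k :: v.
Proof. by rewrite /= inE => /orP[/eqP->|/mapP[v v_in ->]]; [left|right; exists v]. Qed.

Lemma inc_images_rcons v M w : w \in inc_images (rcons v M) ->
  w = rcons v M \/ exists2 x, x \in inc_images v & w = rcons x M.+1.
Proof.
elim: v w => [|k v IH] w.
  rewrite /= !inE => /orP[/eqP->|/eqP->]; last by left.
  by right; exists [::]; rewrite ?inE.
rewrite rcons_cons => /inc_imagesP [->|[w' w'_in ->]].
  by right; exists (map succn (k :: v)); rewrite ?inc_images_succ // -map_rcons.
case: (IH w' w'_in) => [->|[x x_in ->]]; first by left.
by right; exists (k :: x); rewrite ?inc_images_cons.
Qed.

Definition near (x y : nat) : bool := (x <= y) && (y <= x.+1).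

Lemma inc_images_near u w : w \in inc_images u -> all2 near u w.
Proof.
elim: u w => [|k u IH] w; first by rewrite inE => /eqP->.
case/inc_imagesP => [->|[v v_in ->]] /=; last by rewrite /near leqnn ltnW //= IH.
rewrite /near leqnn ltnW //=; elim: u {IH} => //= x s ->.
by rewrite /near leqnn ltnW.
Qed.

Lemma inc_images_dset k e u w : is_dset k e u -> w \in inc_images u -> is_dset k e w.
Proof.
elim: u k e w => [|x u IH] k e w; first by rewrite inE => ? /eqP->.
case: e => [|e]; first by rewrite /is_dset andbC.
rewrite is_dset_cons => /andP[kx u_dset].
case/inc_imagesP => [->|[v v_in ->]]; last by rewrite is_dset_cons kx (IH _ _ _ u_dset v_in).
rewrite /= is_dset_cons ltnS ltnW //=.
move: u_dset; rewrite /is_dset => /and3P[s1 s2 s3]; rewrite size_map s2 /=.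
rewrite sorted_map; apply/andP; split.
  by apply: sub_sorted s1 => a b /=; rewrite ltnS.
by rewrite all_map; apply: sub_all s3 => a /=; rewrite ltnS.
Qed.

Lemma Inc1_ge pi j : Inc1 pi -> 1 <= j -> j <= pi j.
Proof.
move=> pi_inc; elim: j => // j IH _.
case: j IH => [|j] IH; first by case: (pi_inc 1 (leqnn 1)).
by have [_ step _] := pi_inc j.+1 (ltn0Sn _); have := IH (ltn0Sn _); lia.
Qed.

Lemma Inc1_shift pi j i : Inc1 pi -> 1 <= j -> pi j = j.+1 -> pi (j + i) = (j + i).+1.
Proof.
move=> pi_inc j1 pij; elim: i => [|i IH]; first by rewrite addn0.
have [_ h1 h2] := pi_inc (j + i) (leq_trans j1 (leq_addr _ _)).
have [_ _ h3] := pi_inc (j + i).+1 (ltn0Sn _).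
by rewrite addnS; lia.
Qed.

Lemma Inc1_image_in u pi : sorted ltn u -> all (fun x => 0 < x) u -> Inc1 pi ->
  map pi u \in inc_images u.
Proof.
move=> u_sorted u_pos pi_inc; elim: u u_sorted u_pos => [|k u IH] //=.
rewrite (path_sortedE ltn_trans) => /andP[k_lt u_sorted] /andP[k_pos u_pos].
have [_ _ pik] := pi_inc k k_pos; have := Inc1_ge pi_inc k_pos.
rewrite leq_eqVlt => /orP[/eqP pik_eq|k_lt_pik]; last first.
  have pik_eq : pi k = k.+1 by lia.
  rewrite inE pik_eq; apply/orP; left; apply/eqP; congr (_ :: _).
  apply/eq_in_map => x x_in; have := allP k_lt x x_in => kx.
  by have := Inc1_shift (x - k) pi_inc k_pos pik_eq; rewrite subnKC //; lia.
by rewrite -pik_eq inE map_f ?orbT ?IH.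
Qed.

Lemma inc_image_Inc1 u w : sorted ltn u -> w \in inc_images u ->
  exists pi, Inc1 pi /\ w = map pi u.
Proof.
elim: u w => [|k u IH] w u_sorted w_in.
  by exists succn; split; [move=> j _; split | move: w_in; rewrite inE => /eqP->].
have [->|[v v_in ->]] := inc_imagesP w_in; first by exists succn; split => // j _; split.
move: u_sorted; rewrite /= (path_sortedE ltn_trans) => /andP[k_lt u_sorted].
have [pi [pi_inc ->]] := IH v u_sorted v_in.
exists (fun j => if j <= k then j else pi j); split.
  move=> j j1; case: (ltngtP j k) => jk; [by split | exact: pi_inc j j1|].
  by have := Inc1_ge pi_inc (ltn0Sn j); split => //; lia.
rewrite /= leqnn; congr (_ :: _); apply/eq_in_map => x x_in.
by rewrite leqNgt (allP k_lt x x_in).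
Qed.

Lemma enumerates_inc_list d F : (forall u, u \in F -> is_dset 0 d u) ->
  enumerates (undup (inc_list F)) (IncF F).
Proof.
move=> F_dset; split; first exact: undup_uniq.
move=> w; rewrite mem_undup; split.
  case/inc_listP => u u_in w_in.
  have [pi [pi_inc ->]] := inc_image_Inc1 (is_dset_sorted (F_dset u u_in)) w_in.
  by exists u, pi.
case=> u [pi [u_in pi_inc ->]]; apply/inc_listP; exists u => //.
by case/and3P: (F_dset u u_in) => u_sorted _ u_pos; exact: Inc1_image_in.
Qed.

Definition down_closed (k : nat) (H : seq (seq nat)) : Prop :=
  forall u v, u \in H -> is_dset k (size u) v -> all2 leq v u -> v \in H.

Lemma all2_leq_refl s : all2 leq s s.
Proof. by elim: s => //= x s ->; rewrite leqnn. Qed.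

Lemma near_sub A w t : 0 < t -> all2 near A w -> all2 leq (map (subn^~ t) w) A.
Proof.
move=> t_pos; elim: A w => [|x A IH] [|y w] //= /andP[xy /IH ->].
by rewrite andbT; move: xy; rewrite /near; lia.
Qed.

Lemma down_closed_sub k H A w t : down_closed k H -> A \in H -> all2 near A w ->
  0 < t -> is_dset k (size A) (map (subn^~ t) w) -> map (subn^~ t) w \in H.
Proof. by move=> H_down A_in Aw t_pos w_dset; apply: H_down A_in w_dset (near_sub t_pos Aw). Qed.

Lemma dset_head_gt k e w : is_dset k e.+1 w -> k < head 0 w.
Proof. by case: w => [|x w]; rewrite ?is_dset_nil // is_dset_cons => /andP[]. Qed.

Lemma dset_above_head k e x s : is_dset k e (x :: s) -> is_dset x.-1 e (x :: s).
Proof.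
case: e => [|e]; first by move/is_dset_size.
by rewrite !is_dset_cons => /andP[kx ->]; rewrite andbT; lia.
Qed.

Lemma dset_sub k e t w : is_dset (k + t) e w -> is_dset k e (map (subn^~ t) w).
Proof.
case/and3P => w_sorted w_size w_gt; apply/and3P; split.
- rewrite sorted_map; apply: (sub_in_sorted _ w_gt w_sorted) => x y /= tx ty /=; lia.
- by rewrite size_map.
- by rewrite all_map; apply: sub_all w_gt => x /=; lia.
Qed.

Lemma sub_map_eq t1 t2 w1 w2 : t1 <= t2 ->
  all (fun x => t1 <= x) w1 -> all (fun x => t2 <= x) w2 ->
  map (subn^~ t1) w1 = map (subn^~ t2) w2 -> w1 = map (subn^~ (t2 - t1)) w2.
Proof.
move=> t12; elim: w1 w2 => [|x1 w1 IH] [|x2 w2] //= /andP[x1t w1t] /andP[x2t w2t] [x12 w12].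
by rewrite (IH w2) //; congr (_ :: _); lia.
Qed.

Section LowerBoundStep.

Variables (k d : nat) (H : seq (seq nat)).
Hypothesis H_dset : forall u, u \in H -> is_dset k d.+1 u.
Hypothesis H_down : down_closed k H.

Definition starts_low (w : seq nat) : bool := head 0 w == k.+1.
Definition low_links : seq (seq nat) := [seq behead u | u <- H & starts_low u].
Definition high_part : seq (seq nat) := [seq u <- H | ~~ starts_low u].

Local Notation L := low_links.
Local Notation R := high_part.

Lemma H_head_tail u : u \in H -> u = head 0 u :: behead u.
Proof. by move=> /H_dset /is_dset_size; case: u. Qed.

Lemma mem_low_links v : (v \in L) = (k.+1 :: v \in H).
Proof.
apply/mapP/idP => [[u]|v_in]; last by exists (k.+1 :: v); rewrite // mem_filter /starts_low eqxx.
by rewrite mem_filter => /andP[/eqP u_head u_in] ->; rewrite -u_head -H_head_tail.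
Qed.

Lemma size_split : size L + size R = size H.
Proof. by rewrite size_map !size_filter count_predC. Qed.

Lemma low_links_uniq : uniq H -> uniq L.
Proof.
move=> H_uniq; rewrite map_inj_in_uniq ?filter_uniq // => u1 u2.
rewrite !mem_filter => /andP[/eqP p1 u1_in] /andP[/eqP p2 u2_in] same_tail.
by rewrite (H_head_tail u1_in) (H_head_tail u2_in) same_tail p1 p2.
Qed.

Lemma high_part_uniq : uniq H -> uniq R.
Proof. exact: filter_uniq. Qed.

Lemma low_links_dset v : v \in L -> is_dset k.+1 d v.
Proof. by rewrite mem_low_links => /H_dset; rewrite is_dset_cons => /andP[]. Qed.

Lemma high_part_dset u : u \in R -> is_dset k.+1 d.+1 u.
Proof.
rewrite mem_filter => /andP[u_high u_in]; move: (H_dset u_in) u_high.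
by rewrite (H_head_tail u_in) !is_dset_cons /starts_low /= => /andP[kx ->]; rewrite andbT; lia.
Qed.

Lemma low_links_down : down_closed k.+1 L.
Proof.
move=> u v; rewrite !mem_low_links => u_in v_dset vu; apply: H_down u_in _ _.
  by rewrite /= is_dset_cons ltnSn.
by rewrite /= leqnn.
Qed.

Lemma high_part_down : down_closed k.+1 R.
Proof.
move=> u v; rewrite !mem_filter => /andP[u_high u_in] v_dset vu.
rewrite (H_down u_in (is_dset_mono (leqnSn k) v_dset) vu) andbT /starts_low.
case: v v_dset {vu} => [|x v]; first by rewrite is_dset_nil (is_dset_size (H_dset u_in)).
by rewrite (is_dset_size (H_dset u_in)) is_dset_cons /= => /andP[kx _]; lia.
Qed.

(* Some set starts with k+1: lower the head of any u in H to k+1. *)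
Lemma low_links_nonempty : H != [::] -> 0 < size L.
Proof.
move=> H_ne; have [u u_in] : exists u, u \in H.
  by case: (H) H_ne => // u ? _; exists u; rewrite mem_head.
have := H_dset u_in; rewrite (H_head_tail u_in) is_dset_cons => /andP[k_lt tail_dset].
have low_in : k.+1 :: behead u \in H.
  apply: (H_down u_in); first by rewrite (is_dset_size (H_dset u_in)) is_dset_cons ltnSn
    (is_dset_mono k_lt tail_dset).
  by rewrite {2}(H_head_tail u_in) /= k_lt all2_leq_refl.
by rewrite -mem_low_links in low_in; case: (L) low_in.
Qed.

Lemma high_part_smaller : H != [::] -> size R < size H.
Proof. by move=> /low_links_nonempty; have := size_split; lia. Qed.

(* Inc(H) contains k+1 :: Inc(L) and the disjoint set succ(H) of sets not
   starting with k+1, so |Inc(H)| >= |H| + |Inc(L)|. *)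
Lemma inc_size_split : uniq H ->
  size H + size (undup (inc_list L)) <= size (undup (inc_list H)).
Proof.
move=> H_uniq; set X := undup (inc_list H); rewrite -(count_predC starts_low X) addnC.
apply: leq_add.
  rewrite -size_filter -(size_map (cons k.+1) (undup (inc_list L))); apply: uniq_leq_size.
    by rewrite map_inj_uniq ?undup_uniq // => ? ? [].
  move=> w /mapP[v]; rewrite !mem_undup => /inc_listP[u' u'_in v_in] ->.
  rewrite mem_filter /starts_low eqxx mem_undup /=; apply/inc_listP.
  by exists (k.+1 :: u'); [rewrite -mem_low_links | exact: inc_images_cons].
rewrite -size_filter -(size_map (map succn) H); apply: uniq_leq_size.
  by rewrite map_inj_uniq //; exact: (inj_map succn_inj).
move=> w /mapP[u u_in ->]; rewrite mem_filter mem_undup; apply/andP; split.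
  have := H_dset u_in; rewrite (H_head_tail u_in) is_dset_cons /= /starts_low => /andP[kx _].
  by rewrite eqSS; lia.
by apply/inc_listP; exists u => //; apply: inc_images_succ; rewrite (H_head_tail u_in).
Qed.

Definition lower (w : seq nat) : seq nat := map (subn^~ (head 0 w - k.+1)) w.

Lemma lower_in w : w \in inc_list R -> lower w \in H /\ lower w = k.+1 :: behead (lower w).
Proof.
case/inc_listP => A A_in w_in; have A_dset := high_part_dset A_in.
have w_dset := inc_images_dset A_dset w_in.
case: w w_dset w_in => [|x w]; first by rewrite is_dset_nil.
move=> w_dset w_in; have := w_dset; rewrite is_dset_cons => /andP[kx _].
split; last by rewrite /lower /=; congr (_ :: _); lia.
apply: (@down_closed_sub _ _ A _ _ H_down); first by move: A_in; rewrite mem_filter => /andP[].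
- exact: inc_images_near.
- by rewrite /=; lia.
rewrite (is_dset_size A_dset); apply: dset_sub; apply: is_dset_mono (dset_above_head w_dset).
by rewrite /=; lia.
Qed.

(* lower is injective on Inc(R) \ R: if lower w1 = lower w2 with different shifts,
   then w1 is a proper shift of w2, lies below an element of R, hence in R. *)
Lemma lower_inj w1 w2 : w1 \in inc_list R -> w2 \in inc_list R ->
  w1 \notin R -> w2 \notin R -> lower w1 = lower w2 -> w1 = w2.
Proof.
wlog t12 : w1 w2 / head 0 w1 - k.+1 <= head 0 w2 - k.+1.
  move=> sym w1_in w2_in w1_out w2_out same.
  case: (leqP (head 0 w1 - k.+1) (head 0 w2 - k.+1)) => t12; first exact: sym.
  by apply/esym/sym => //; lia.
have inc_facts w : w \in inc_list R -> exists2 A, A \in R & all2 near A w /\ is_dset k.+1 d.+1 w.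
  case/inc_listP => A A_in w_in; exists A => //; split; first exact: inc_images_near.
  exact: inc_images_dset (high_part_dset A_in) w_in.
have above_shift w : is_dset k.+1 d.+1 w -> all (fun x => head 0 w - k.+1 <= x) w.
  by move=> w_dset; apply/allP => x x_in; have := dset_head_le w_dset x_in; lia.
move=> /inc_facts[A1 A1_in [_ w1_dset]] /inc_facts[A2 A2_in [A2w2 w2_dset]] w1_out _ same.
have w1_high : ~~ starts_low w1 by have := dset_head_gt w1_dset; rewrite /starts_low; lia.
have w12 := sub_map_eq t12 (above_shift _ w1_dset) (above_shift _ w2_dset) same.
set t := head 0 w2 - k.+1 - (head 0 w1 - k.+1) in w12.
case: (posnP t) => t_pos.
  by rewrite w12 t_pos; apply: map_id_in => x _; rewrite subn0.
case/negP: w1_out; rewrite mem_filter w1_high /=.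
have A2_H : A2 \in H by move: A2_in; rewrite mem_filter => /andP[].
rewrite w12; apply: (down_closed_sub H_down A2_H A2w2 t_pos).
by rewrite -w12 (is_dset_size (high_part_dset A2_in)); apply: is_dset_mono w1_dset.
Qed.

(* Inc(R) consists of sets of R and of sets injected into L by behead \o lower. *)
Lemma inc_high_part_size : size (undup (inc_list R)) <= size R + size L.
Proof.
set Y := undup (inc_list R); rewrite -(count_predC (mem R) Y); apply: leq_add.
  rewrite -size_filter; apply: uniq_leq_size; first by rewrite filter_uniq ?undup_uniq.
  by move=> w; rewrite mem_filter => /andP[].
rewrite -size_filter; set S := filter _ Y; rewrite -(size_map (behead \o lower) S).
apply: uniq_leq_size.
  rewrite map_inj_in_uniq ?filter_uniq ?undup_uniq // => w1 w2.
  rewrite !mem_filter !mem_undup /= => /andP[w1_out w1_in] /andP[w2_out w2_in] same.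
  apply: lower_inj => //.
  by rewrite (proj2 (lower_in w1_in)) (proj2 (lower_in w2_in)) same.
move=> v /mapP[w]; rewrite mem_filter mem_undup => /andP[_ w_in] ->.
by have [low_H low_eq] := lower_in w_in; rewrite mem_low_links /= -low_eq.
Qed.

End LowerBoundStep.

(* Induction on d and then on |H|: with |H| = |L| + |R| as in the split above,
     Phi_{d+1}(|R|) <= |Inc(R)| <= |R| + |L|,
   so beta gives Phi_{d+1}(|H|) <= |H| + Phi_d(|L|) <= |H| + |Inc(L)| <= |Inc(H)|. *)
Theorem inc_lower_bound d k H : uniq H -> (forall u, u \in H -> is_dset k d u) ->
  down_closed k H -> Phi d (size H) <= size (undup (inc_list H)).
Proof.
elim: d k H => [|d IHd] k H H_uniq H_dset H_down.
  apply: uniq_leq_size => // u u_in; rewrite mem_undup.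
  by apply/inc_listP; exists u; rewrite ?inc_images_id.
have [n] := ubnP (size H); elim: n k H H_uniq H_dset H_down => // n IHn k H.
move=> H_uniq H_dset H_down H_lt; case: (posnP (size H)) => [->|H_pos]; first by rewrite Phi0.
have R_ind : Phi d.+1 (size (high_part k H)) <= size (undup (inc_list (high_part k H))).
  apply: IHn; [exact: high_part_uniq | exact: high_part_dset H_dset |
    exact: high_part_down H_dset H_down |].
  have H_ne : H != [::] by rewrite -size_eq0 -lt0n.
  by rewrite ltnS in H_lt; apply: leq_trans H_lt; apply: high_part_smaller H_dset H_down H_ne.
have L_ind : Phi d (size (low_links k H)) <= size (undup (inc_list (low_links k H))).
  apply: IHd; [exact: low_links_uniq H_dset H_uniq | exact: low_links_dset H_dset |
    exact: low_links_down H_dset H_down].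
have R_bound := inc_high_part_size H_dset H_down.
have := @beta d (size (low_links k H)) (size (high_part k H)).
rewrite size_split => H_beta; have H_split := inc_size_split H_dset H_uniq.
have := size_split k H; set h := size H in H_split H_beta *; lia.
Qed.

Lemma all2_rcons (r : nat -> nat -> bool) s t x y : size s = size t ->
  all2 r (rcons s x) (rcons t y) = all2 r s t && r x y.
Proof.
elim: s t => [|a s IH] [|b t] //=; first by rewrite andbT.
by move=> [st]; rewrite IH // andbA.
Qed.

(* Entrywise smaller sets are smaller in the squashed order: compare from the top. *)
Lemma squashed_lt_of_le k e u v : is_dset k e u -> is_dset k e v ->
  all2 leq v u -> v != u -> squashed_lt v u.
Proof.
elim/last_ind: u e v => [|u x IH] e v u_dset v_dset vu v_ne.
  by move: (is_dset_size u_dset) (is_dset_size v_dset) v_ne => <- /eqP; rewrite size_eq0 => /eqP->.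
case: e u_dset v_dset => [|e] u_dset v_dset.
  by move: (is_dset_size u_dset); rewrite size_rcons.
case/lastP: v v_dset vu v_ne => [|v y] v_dset vu v_ne; first by move: (is_dset_size v_dset).
have sz : size v = size u.
  by move: (is_dset_size u_dset) (is_dset_size v_dset); rewrite !size_rcons => -[->] [->].
rewrite all2_rcons // in vu; case/andP: vu => vu yx.
case: (ltngtP y x) yx => // y_cmp _.
  by apply: squashed_lt_last v_dset u_dset _; rewrite !last_rcons.
move: u_dset v_dset v_ne; rewrite y_cmp !is_dset_rcons.
move=> /and3P[u_dset u_lt _] /and3P[v_dset _ _] v_ne.
have v_ne' : v != u by apply: contra v_ne => /eqP->.
have [z [z_u z_v z_top]] := IH e v u_dset v_dset vu v_ne'.
exists z; split.
- by rewrite mem_rcons inE z_u orbT.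
- rewrite mem_rcons inE (negbTE z_v) orbF; apply/eqP => zx.
  by move/allP: u_lt => /(_ z z_u); lia.
- by move=> w zw; rewrite !mem_rcons !inE z_top.
Qed.

Lemma right_compressed_lower d H u v M : right_compressed d H -> 0 < M ->
  rcons u M \in H -> is_dset 0 d.-1 u -> is_dset 0 d.-1 v -> all (fun y => y < M) u ->
  all2 leq v u -> rcons v M \in H.
Proof.
move=> H_right M_pos u_in u_dset v_dset u_lt vu; case: (eqVneq v u) => [->//|v_ne].
have [_ H_init] := H_right M M_pos.
have u_hat : hatFd d M H u by split.
by case: (H_init v u u_hat v_dset (squashed_lt_of_le u_dset v_dset vu v_ne)).
Qed.

Lemma left_compressed_lower d H h v M M' : left_compressed d.+2 H -> 0 < h ->
  h :: rcons v M \in H -> is_dset h d.+1 (rcons v M) -> is_dset h d.+1 (rcons v M') ->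
  M' < M -> h :: rcons v M' \in H.
Proof.
move=> H_left h_pos top_in top_dset low_dset M_lt.
have [_ H_init] := H_left h h_pos.
have top_hat : hatF1 d.+2 h H (rcons v M) by split.
have low_sq : squashed_lt (rcons v M') (rcons v M).
  by apply: squashed_lt_last low_dset top_dset _; rewrite !last_rcons.
by case: (H_init _ _ top_hat low_dset low_sq).
Qed.

(* For d >= 2, a family in binom(N, d) that is left- and right-compressed is
   down-closed: first lower all but the maximum (right compression), then
   lower the maximum (left compression at the minimum). *)
Theorem down_closed_of_compressed d H : 2 <= d -> (forall u, u \in H -> is_dset 0 d u) ->
  left_compressed d H -> right_compressed d H -> down_closed 0 H.
Proof.
case: d => [|[|d]] // _ H_dset H_left H_right u v u_in.
rewrite (is_dset_size (H_dset u u_in)); have := H_dset u u_in.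
case/lastP: u u_in => [|u M] u_in; first by move/is_dset_size.
case/lastP: v => [|v M'] u_dset; first by move/is_dset_size.
move=> v_dset; have sz : size v = size u.
  by move: (is_dset_size u_dset) (is_dset_size v_dset); rewrite !size_rcons => -[->] [->].
rewrite all2_rcons // => /andP[vu M'M].
move: (u_dset) (v_dset); rewrite !is_dset_rcons => /and3P[u_dset' u_lt M_pos] /and3P[v_dset' _ _].
have low_in := right_compressed_lower H_right M_pos u_in u_dset' v_dset' u_lt vu.
case: (ltngtP M' M) M'M => // M_cmp _; last by rewrite M_cmp.
case: v {vu sz} low_in v_dset v_dset' => [|h v] low_in v_dset; first by rewrite is_dset_nil.
move: (H_dset _ low_in) v_dset; rewrite !rcons_cons !is_dset_cons.
move=> /andP[h_pos top_dset] /andP[_ low_dset] _.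
exact: left_compressed_lower H_left h_pos low_in top_dset low_dset M_cmp.
Qed.

Fixpoint dsets_upto (M d : nat) : seq (seq nat) :=
  match M, d with
  | M'.+1, d'.+1 => dsets_upto M' d ++ map (rcons^~ M) (dsets_upto M' d')
  | _, 0 => [:: [::]]
  | 0, _.+1 => [::]
  end.

Lemma size_dsets_upto M d : size (dsets_upto M d) = 'C(M, d).
Proof. by elim: M d => [|M IH] [|d] //=; rewrite size_cat size_map !IH binS. Qed.

Lemma mem_dsets_upto M d v :
  (v \in dsets_upto M d) = is_dset 0 d v && all (fun x => x <= M) v.
Proof.
elim: M d v => [|M IH] [|d] v /=.
- by rewrite inE /is_dset; case: v => //= x v; rewrite !andbF.
- case: v => [|x v]; first by rewrite in_nil is_dset_nil.
  by rewrite in_nil is_dset_cons /= leqn0; case: x => [|x] /=; rewrite ?andbF.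
- by rewrite inE /is_dset; case: v => //= x v; rewrite !andbF.
rewrite mem_cat IH; case/lastP: v => [|v x].
  by rewrite is_dset_nil /=; apply/negbTE/mapP => -[v _]; case: v.
have -> : (rcons v x \in map (rcons^~ M.+1) (dsets_upto M d)) =
          (x == M.+1) && (v \in dsets_upto M d).
  apply/mapP/andP => [[v' v'_in /rcons_inj[-> ->]]|[/eqP-> v_in]] //; by exists v.
rewrite is_dset_rcons !all_rcons IH.
case v_dset: (is_dset 0 d v); last by rewrite /= ?andbF.
case v_lt: (all (fun y => y < x) v); last first.
  rewrite /= andbC; apply/negbTE/andP => -[v_le /eqP x_eq]; move/negP: v_lt; apply.
  by apply: sub_all v_le => y /=; lia.
have v_le B : x <= B.+1 -> all (fun y => y <= B) v by move=> xB; apply: sub_all v_lt => y /=; lia.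
case: (ltngtP x M.+1) => x_cmp.
- by rewrite (v_le M) ?(v_le M.+1) //= ?andbT; lia.
- by rewrite /= !andbF ?andbT; lia.
- by move: v_le; rewrite x_cmp => v_le; rewrite (v_le M) ?(v_le M.+1) ?leqnSn //= orbT.
Qed.

Lemma dsets_upto_uniq M d : uniq (dsets_upto M d).
Proof.
elim: M d => [|M IH] [|d] //=.
rewrite cat_uniq IH map_inj_uniq ?IH ?andbT; last exact: rcons_injl.
apply/hasP => -[w /mapP[v _ ->]].
by rewrite mem_dsets_upto => /andP[_]; rewrite all_rcons ltnn.
Qed.

Lemma squashed_lt_bound u v B : squashed_lt u v ->
  all (fun y => y <= B) v -> all (fun y => y <= B) u.
Proof.
case=> x [x_v x_u x_top] /allP v_le; apply/allP => y y_u.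
by case: (leqP y x) => [yx|/x_top]; [have := v_le x x_v; lia | rewrite y_u => /esym /v_le].
Qed.

Lemma near_bound u w B : all2 near u w ->
  all (fun y => y <= B) u -> all (fun y => y <= B.+1) w.
Proof.
elim: u w => [|x u IH] [|y w] //= /andP[xy uw] /andP[xB uB].
by rewrite (IH _ uw uB) andbT; move: xy; rewrite /near; lia.
Qed.

Lemma exists_max_last (G : seq (seq nat)) : G != [::] ->
  exists2 u, u \in G & forall v, v \in G -> last 0 v <= last 0 u.
Proof.
elim: G => // u G IH _; case: (eqVneq G [::]) => [->|G_ne].
  by exists u; rewrite ?mem_head // => v; rewrite inE => /eqP->.
have [u' u'_in u'_max] := IH G_ne.
case: (leqP (last 0 u) (last 0 u')) => cmp.
  by exists u' => [|v]; rewrite ?inE ?u'_in ?orbT // => /orP[/eqP->|/u'_max].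
exists u => [|v]; rewrite ?mem_head // inE => /orP[/eqP->//|/u'_max]; lia.
Qed.

Section UpperBoundStep.

(* Being an initial segment, G contains all of binom({1..M-1}, e+1), and its other
   sets are rcons v M for v in the family R = top_links, which is compressed in
   binom(N, e) and inside binom({1..M-1}, e). *)
Variables (e : nat) (G : seq (seq nat)) (u0 : seq nat).
Hypothesis G_comp : compressed_in 0 e.+1 (fun u => u \in G).
Hypothesis u0_in : u0 \in G.
Hypothesis u0_max : forall v, v \in G -> last 0 v <= last 0 u0.

Local Notation M := (last 0 u0).

Definition top_links : seq (seq nat) := [seq v <- dsets_upto M.-1 e | rcons v M \in G].
Local Notation R := top_links.

Lemma G_dset u : u \in G -> is_dset 0 e.+1 u.
Proof. by case: G_comp => G_dset _; exact: G_dset. Qed.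

(* M is an element of u0, hence positive. *)
Lemma M_pos : 0 < M.
Proof.
have u0_dset := G_dset u0_in; apply: (is_dset_gt u0_dset); apply: last_in.
by apply/eqP => u00; move: u0_dset; rewrite u00 is_dset_nil.
Qed.

Lemma mem_top_links v :
  (v \in R) = [&& rcons v M \in G, is_dset 0 e v & all (fun y => y <= M.-1) v].
Proof. by rewrite mem_filter mem_dsets_upto. Qed.

Lemma G_top u : u \in G -> M <= last 0 u -> exists2 v, v \in R & u = rcons v M.
Proof.
move=> u_in u_ge; have u_last : last 0 u = M by have := u0_max u_in; lia.
have u_dset := G_dset u_in.
case/lastP: u u_in u_dset u_last {u_ge} => [|v x]; first by move=> _; rewrite is_dset_nil.
move=> u_in; rewrite is_dset_rcons last_rcons => /and3P[v_dset v_lt _] x_eq.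
rewrite x_eq in u_in v_lt *; exists v => //.
by rewrite mem_top_links u_in v_dset /=; apply: sub_all v_lt => y /=; lia.
Qed.

Lemma count_below_top : uniq G -> count (fun u => last 0 u < M) G = 'C(M.-1, e.+1).
Proof.
move=> G_uniq; rewrite -size_filter -size_dsets_upto; apply/perm_size/uniq_perm.
- exact: filter_uniq.
- exact: dsets_upto_uniq.
move=> u; rewrite mem_filter mem_dsets_upto; apply/andP/andP => [[u_below u_in]|[u_dset u_le]].
  split; first exact: G_dset.
  by apply/allP => y y_u; have := dset_le_last (G_dset u_in) y_u; lia.
have u_last : last 0 u <= M.-1.
  by apply: (allP u_le); apply: last_in; apply/eqP => u0'; move: u_dset; rewrite u0' is_dset_nil.
have u_below : last 0 u < M by have := M_pos; lia.
split => //; case: G_comp => _ G_init; apply: (G_init u u0 u0_in u_dset).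
exact: squashed_lt_last u_dset (G_dset u0_in) u_below.
Qed.

Lemma count_top : uniq G -> count (predC (fun u => last 0 u < M)) G = size R.
Proof.
move=> G_uniq; rewrite -size_filter -(size_map (rcons^~ M) R); apply/perm_size/uniq_perm.
- exact: filter_uniq.
- by rewrite map_inj_uniq ?filter_uniq ?dsets_upto_uniq //; exact: rcons_injl.
move=> u; rewrite mem_filter /=; apply/andP/mapP => [[not_below u_in]|[v v_in ->]].
  by rewrite -leqNgt in not_below; have [v v_in ->] := G_top u_in not_below; exists v.
by rewrite last_rcons ltnn; move: v_in; rewrite mem_top_links => /andP[].
Qed.

(* u0 gives an element of R, and R lies in binom({1..M-1}, e). *)
Lemma top_links_size : uniq G -> 0 < size R <= 'C(M.-1, e).
Proof.
move=> G_uniq; apply/andP; split; last by rewrite -size_dsets_upto size_filter count_size.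
by rewrite -(count_top G_uniq) -has_count; apply/hasP; exists u0 => //=; rewrite ltnn.
Qed.

(* R is again an initial segment: prepending the common maximum M preserves
   the squashed order. *)
Lemma top_links_compressed : compressed_in 0 e (fun v => v \in R).
Proof.
split=> [v|u v]; first by rewrite mem_top_links => /and3P[].
rewrite !mem_top_links => /and3P[v_top v_dset v_le] u_dset u_sq.
have u_le := squashed_lt_bound u_sq v_le; rewrite u_dset u_le /= andbT.
case: G_comp => _ G_init; apply: (G_init (rcons u M) (rcons v M) v_top).
  by rewrite is_dset_rcons u_dset M_pos andbT /=; apply: sub_all u_le => y /=; have := M_pos; lia.
case: u_sq => x [x_v x_u x_top]; exists x; split.
- by rewrite mem_rcons inE x_v orbT.
- rewrite mem_rcons inE (negbTE x_u) orbF; apply/eqP => xM.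
  by move/allP: v_le => /(_ x x_v); have := M_pos; lia.
- by move=> y xy; rewrite !mem_rcons !inE x_top.
Qed.

Lemma inc_top_cover :
  {subset undup (inc_list G) <= dsets_upto M e.+1 ++ map (rcons^~ M.+1) (undup (inc_list R))}.
Proof.
move=> w; rewrite mem_undup mem_cat => /inc_listP [u u_in w_in].
have u_dset := G_dset u_in; have w_dset := inc_images_dset u_dset w_in.
case: (ltnP (last 0 u) M) => u_last.
  apply/orP; left; rewrite mem_dsets_upto w_dset /= -(prednK M_pos).
  apply: near_bound (inc_images_near w_in) _.
  by apply/allP => y y_u; have := dset_le_last u_dset y_u; lia.
have [v v_in u_eq] := G_top u_in u_last.
move: w_in; rewrite u_eq => /inc_images_rcons [w_eq|[x x_in w_eq]]; apply/orP.
  left; rewrite mem_dsets_upto w_dset w_eq all_rcons leqnn /=.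
  by move: v_in; rewrite mem_top_links => /and3P[_ _]; apply: sub_all => y /=; lia.
by right; rewrite w_eq; apply: map_f; rewrite mem_undup; apply/inc_listP; exists v.
Qed.

End UpperBoundStep.

(* With M, R as above, |G| = C(M-1, e+1) + |R| with 0 < |R| <= C(M-1, e), and
   |Inc(G)| <= C(M, e+1) + |Inc(R)| <= C(M, e+1) + Phi_e(|R|) = Phi_{e+1}(|G|). *)
Theorem inc_upper_bound e G : uniq G -> compressed_in 0 e (fun u => u \in G) ->
  size (undup (inc_list G)) <= Phi e (size G).
Proof.
elim: e G => [|e IH] G G_uniq G_comp.
  case: G G_uniq G_comp => [|u G] // _ [G_dset _]; apply: (@leq_trans (size [:: [::]])) => //.
  apply: uniq_leq_size (undup_uniq _) _ => w; rewrite mem_undup => /inc_listP [v v_in].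
  by case: v v_in (is_dset_size (G_dset v v_in)).
case: (eqVneq G [::]) => [->|G_ne]; first by rewrite Phi0.
have [u0 u0_in u0_max] := exists_max_last G_ne.
have /andP[R_pos R_le] := top_links_size G_comp u0_in u0_max G_uniq.
have R_bound : size (undup (inc_list (top_links e G u0))) <= Phi e (size (top_links e G u0))
  := IH _ (filter_uniq _ (dsets_upto_uniq _ _)) (top_links_compressed G_comp u0_in).
have G_size : size G = 'C((last 0 u0).-1, e.+1) + size (top_links e G u0).
  rewrite -(count_below_top G_comp u0_in G_uniq).
  by rewrite -(count_top G_comp u0_in u0_max G_uniq) count_predC.
have := uniq_leq_size (undup_uniq _) (inc_top_cover G_comp u0_in u0_max).
rewrite size_cat size_map size_dsets_upto G_size Phi_cascade ?R_pos //.
by rewrite prednK ?(M_pos G_comp u0_in) // => /leq_trans; apply; rewrite leq_add2l.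
Qed.

Theorem mainTheorem10 (d : nat) (G H : seq (seq nat)) :
  2 <= d ->
  uniq G -> uniq H ->
  size G = size H ->
  compressed_in 0 d (fun u => u \in G) ->
  (forall u, u \in H -> is_dset 0 d u) ->
  left_compressed d H -> right_compressed d H ->
  exists sG sH, [/\ enumerates sG (IncF G), enumerates sH (IncF H)
                  & size sG <= size sH].
Proof.
(* |Inc(G)| <= Phi_d(|G|) = Phi_d(|H|) <= |Inc(H)|, as H is down-closed. *)
move=> d2 G_uniq H_uniq same_size G_comp H_dset H_left H_right.
have G_dset : forall u, u \in G -> is_dset 0 d u by case: G_comp.
have H_down := down_closed_of_compressed d2 H_dset H_left H_right.
exists (undup (inc_list G)), (undup (inc_list H)); split.
- exact: enumerates_inc_list G_dset.
- exact: enumerates_inc_list H_dset.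
apply: leq_trans (inc_upper_bound G_uniq G_comp) _.
by rewrite same_size; exact: inc_lower_bound H_uniq H_dset H_down.
Qed.
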